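(* Let $A\subseteq\mathcal{R}$ be outer measurable and let $(J_n)_{n\ge1}$ be a sequence of pairwise disjoint intervals in $\mathcal{R}$ with $\lim_{n\to\infty}l(J_n)=0$. Then $A\cap\bigcup_{n=1}^\infty J_n$ is outer measurable, the series $\sum_{n=1}^\infty M_u(A\cap J_n)$ converges in $\mathcal{R}$, and $$M_u\Big(A\cap\bigcup_{n=1}^\infty J_n\Big)=\sum_{n=1}^\infty M_u(A\cap J_n).$$
   Context: $\mathcal{R}$ denotes the Levi-Civita field: functions $x:\mathbb{Q}\to\mathbb{R}$ with left-finite support, with componentwise addition and formal power series multiplication, ordered by $x>0$ iff $x\ne0$ and $x[\min\operatorname{supp}x]>0$; it is a non-Archimedean ordered field extension of $\mathbb{R}$, Cauchy complete in the order topology, in which all limits and series are taken (a series $\sum a_n$ converges iff $a_n\to0$). An interval is a set $[a,b],[a,b),(a,b]$ or $(a,b)$ with $a<b$ in $\mathcal{R}$, of length $l=b-a$. A cover of $A\subseteq\mathcal{R}$ is a sequence of intervals $(S_n)_{n\ge1}$ with $A\subseteq\bigcup_n S_n$ and $\sum_n l(S_n)$ convergent in $\mathcal{R}$. $A$ is called outer measurable if the infimum $\inf\{\sum_n l(S_n): (S_n)\text{ a cover of }A\}$ exists in $\mathcal{R}$; this infimum is then called the outer measure $M_u(A)$. (Intersections of an outer measurable set with an interval are outer measurable.) *)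

From HB Require Import structures.
From mathcomp Require Import all_boot all_order all_algebra.
From mathcomp Require Import boolp classical_sets cardinality reals.
Set Implicit Arguments. Unset Strict Implicit. Unset Printing Implicit Defensive.
Import Order.TTheory GRing.Theory Num.Theory.
Local Open Scope classical_set_scope.
Local Open Scope ring_scope.

Section LeviCivita.
Variable R : realType.

Definition left_finite (x : rat -> R) : Prop :=
  forall r : rat, finite_set [set q : rat | q < r /\ x q != 0].

Record LC := mkLC { lc_fun :> rat -> R; lc_lf : left_finite lc_fun }.

Lemma lf_zero : left_finite (fun _ => 0).
Proof.
move=> r; apply: (@sub_finite_set _ _ set0); last exact: finite_set0.
by move=> q [_ /eqP].
Qed.

Lemma lf_add (x y : LC) : left_finite (fun q => x q + y q).
Proof.
move=> r; apply: (@sub_finite_set _ _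
  ([set q : rat | q < r /\ x q != 0] `|` [set q : rat | q < r /\ y q != 0])).
  move=> q [qr]; have [x0|x0] := eqVneq (x q) 0.
    by rewrite x0 add0r => y0; right.
  by move=> _; left.
by rewrite finite_setU; split; apply: lc_lf.
Qed.

Lemma lf_opp (x : LC) : left_finite (fun q => - x q).
Proof.
move=> r; apply: (@sub_finite_set _ _ [set q : rat | q < r /\ x q != 0]).
  by move=> q [qr]; rewrite oppr_eq0.
exact: lc_lf.
Qed.

Definition lc_zero : LC := mkLC lf_zero.
Definition lc_add (x y : LC) : LC := mkLC (lf_add x y).
Definition lc_opp (x : LC) : LC := mkLC (lf_opp x).
Definition lc_sub (x y : LC) : LC := lc_add x (lc_opp y).

(** x > 0 iff x <> 0 and x[min supp x] > 0, i.e. there is q with x q > 0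
    and x p = 0 for all p < q (q is then min supp x). *)
Definition lc_pos (x : LC) : Prop :=
  exists q : rat, 0 < x q /\ forall p : rat, p < q -> x p = 0.

Definition lc_lt (x y : LC) : Prop := lc_pos (lc_sub y x).
Definition lc_le (x y : LC) : Prop := x = y \/ lc_lt x y.

Definition lc_cvg (u : nat -> LC) (l : LC) : Prop :=
  forall e : LC, lc_pos e -> exists N : nat, forall n : nat, (N <= n)%N ->
    lc_lt (lc_sub (u n) l) e /\ lc_lt (lc_sub l (u n)) e.

Fixpoint lc_psum (a : nat -> LC) (n : nat) : LC :=
  match n with
  | 0 => lc_zero
  | n'.+1 => lc_add (lc_psum a n') (a n')
  end.

Definition lc_series (a : nat -> LC) (s : LC) : Prop := lc_cvg (lc_psum a) s.

(** intervals [a,b], [a,b), (a,b], (a,b) with a < b; the booleans say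
    whether the left / right endpoint is included *)
Record lc_interval := mkInterval {
  ia : LC; ib : LC; ia_closed : bool; ib_closed : bool; iab : lc_lt ia ib }.

Definition in_interval (I : lc_interval) : set LC :=
  [set x | (lc_lt (ia I) x \/ (ia_closed I /\ x = ia I)) /\
           (lc_lt x (ib I) \/ (ib_closed I /\ x = ib I))].

Definition ilength (I : lc_interval) : LC := lc_sub (ib I) (ia I).

Definition cover_with_sum (A : set LC) (S : nat -> lc_interval) (s : LC) : Prop :=
  A `<=` \bigcup_n in_interval (S n) /\ lc_series (fun n => ilength (S n)) s.

Definition lc_is_inf (E : set LC) (m : LC) : Prop :=
  (forall s, E s -> lc_le m s) /\
  (forall m', (forall s, E s -> lc_le m' s) -> lc_le m' m).

Definition outer_measure (A : set LC) (m : LC) : Prop :=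
  lc_is_inf [set s | exists S, cover_with_sum A S s] m.

Definition outer_measurable (A : set LC) : Prop :=
  exists m, outer_measure A m.

End LeviCivita.

(* The order of the Levi-Civita field is lexicographic on coefficients, so
   x <= y holds as soon as it holds modulo terms of order at least q for every
   rational q, a sequence converges iff each coefficient is eventually constant,
   and modulo d^q only finitely many terms of a convergent series matter.  All
   estimates are therefore made modulo d^q, for an arbitrary q.

   Lower bound: a cover of A ∩ ⋃ J_n is cut along J_0, J_1, ...  Each interval
   of the cover splits into its part inside J_n and two parts outside it; the
   parts are padded by d^(q+k), which keeps them non-degenerate and costs only
   O(d^q) in total.  This yields covers of the A ∩ J_n whose lengths add up to
   at most the length of the original cover.  Upper bound: nearly optimal
   covers of the A ∩ J_n, enumerated along a bijection N ≃ N × N, cover the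
   union.  The same cutting shows that A ∩ J is outer measurable, and the series
   of the M_u(A ∩ J_n) converges since 0 <= M_u(A ∩ J_n) <= l(J_n) -> 0. *)

From HB Require Import structures.
From mathcomp Require Import all_boot all_order all_algebra finmap.
From mathcomp Require Import boolp classical_sets cardinality reals.
From mathcomp Require Import lra zify.
Set Implicit Arguments. Unset Strict Implicit. Unset Printing Implicit Defensive.
Import Order.TTheory GRing.Theory Num.Theory.
Local Open Scope classical_set_scope.
Local Open Scope ring_scope.

Section LeviCivitaOrder.
Variable R : realType.
Implicit Types (f g : rat -> R) (x y z : LC R).

Lemma lc_ext x y : (forall q, x q = y q) -> x = y.
Proof.
case: x y => [fx hx] [fy hy] /= /funext E; subst fy.
by congr mkLC; exact: Prop_irrelevance.
Qed.

Lemma least_support f p0 : left_finite f -> f p0 != 0 ->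
  exists p, f p != 0 /\ forall r, r < p -> f r = 0.
Proof.
move=> lf fp0; set S := [set q | q < p0 + 1 /\ f q != 0].
have finS : finite_set S by exact: lf.
have p0S : p0 \in fset_set S by rewrite in_fset_set //; apply/mem_set; split; rewrite ?ltrDl.
have [[m mS] _ mmin] := arg_minP val (isT : xpredT (FSetSub p0S)).
move: (mS); rewrite in_fset_set // => /set_mem -[mlt fm].
exists m; split => // r rm; apply/eqP; apply: contraTT (rm) => fr.
have rS : r \in fset_set S.
  by rewrite in_fset_set //; apply/mem_set; split=> //; exact: lt_trans rm mlt.
by rewrite -leNgt; exact: (mmin (FSetSub rS)).
Qed.

Definition lead_pos f := exists q, 0 < f q /\ forall p, p < q -> f p = 0.
Definition lead_nneg f := (forall q, f q = 0) \/ lead_pos f.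

Lemma lead_pos_ext f g : f =1 g -> lead_pos f -> lead_pos g.
Proof. by move=> E [q [fq f0]]; exists q; rewrite -E; split=> // p /f0; rewrite E. Qed.

Lemma lead_posD f g : lead_pos f -> lead_pos g -> lead_pos (fun q => f q + g q).
Proof.
move=> [a [fa f0]] [b [gb g0]]; case: (ltgtP a b) => ab.
- exists a; rewrite g0 // addr0; split=> // p pa.
  by rewrite f0 // g0 ?addr0 //; exact: lt_trans pa ab.
- exists b; rewrite f0 // add0r; split=> // p pb.
  by rewrite g0 // f0 ?addr0 //; exact: lt_trans pb ab.
- by subst b; exists a; split=> [|p pa]; rewrite ?addr_gt0 // f0 ?g0 ?addr0.
Qed.

Lemma lead_pos_asym f : lead_pos f -> ~ lead_pos (fun q => - f q).
Proof.
move=> [a [fa f0]] [b [gb g0]]; case: (ltgtP a b) => ab.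
- by move: (g0 a ab) => /eqP; rewrite oppr_eq0 gt_eqF.
- by move: gb; rewrite f0 // oppr0 ltxx.
- by subst b; move: gb; rewrite oppr_gt0 ltNge ltW.
Qed.

Lemma lead_pos_trichotomy f : left_finite f ->
  (forall q, f q = 0) \/ lead_pos f \/ lead_pos (fun q => - f q).
Proof.
move=> lf; case: (pselect (exists q, f q != 0)) => [[q fq]|f0]; last first.
  by left=> q; apply/eqP; apply: contra_notT f0 => fq; exists q.
right; have [p [fp f0]] := least_support lf fq.
case: (ltgtP 0 (f p)) => [fp_gt0|fp_lt0|fp_eq0].
- by left; exists p.
- by right; exists p; rewrite oppr_gt0; split=> // r /f0 ->; rewrite oppr0.
- by rewrite -fp_eq0 eqxx in fp.
Qed.

Lemma lead_nneg_ext f g : f =1 g -> lead_nneg f -> lead_nneg g.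
Proof. by move=> E [f0|fp]; [left=> q; rewrite -E|right; exact: lead_pos_ext fp]. Qed.

Lemma lead_nneg_posD f g : lead_nneg f -> lead_pos g -> lead_pos (fun q => f q + g q).
Proof.
case=> [f0|fp] gp; last exact: lead_posD.
by apply: lead_pos_ext gp => q; rewrite f0 add0r.
Qed.

Lemma lead_nnegD f g : lead_nneg f -> lead_nneg g -> lead_nneg (fun q => f q + g q).
Proof.
case: (pselect (lead_pos g)) => [gp fn _|gNp fn [g0|//]]; first by right; exact: lead_nneg_posD.
case: fn => [f0|fp]; first by left=> q; rewrite f0 g0 addr0.
by right; apply: lead_pos_ext fp => q; rewrite g0 addr0.
Qed.

Lemma lead_nneg_asym f : lead_nneg f -> ~ lead_pos (fun q => - f q).
Proof.
case=> [f0 [q [+ _]]|]; last exact: lead_pos_asym.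
by rewrite f0 oppr0 ltxx.
Qed.

Lemma lc_leE x y : lc_le x y <-> lead_nneg (fun q => y q - x q).
Proof.
split=> [[->|]|[xy|]]; [by left=> q; rewrite subrr|by right| |by right].
by left; apply: lc_ext => q; apply/eqP; rewrite eq_sym -subr_eq0 xy.
Qed.

Lemma lc_le_refl x : lc_le x x.
Proof. by left. Qed.

Lemma lc_ltW x y : lc_lt x y -> lc_le x y.
Proof. by right. Qed.

Lemma lc_lt_trans x y z : lc_lt x y -> lc_lt y z -> lc_lt x z.
Proof.
move=> xy yz; apply: lead_pos_ext (lead_posD yz xy) => q /=.
by rewrite addrA subrK.
Qed.

Lemma lc_lt_asym x y : lc_lt x y -> ~ lc_lt y x.
Proof. by move=> xy /lead_pos_asym; apply; apply: lead_pos_ext xy => q /=; rewrite opprB. Qed.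

Lemma lc_trichotomy x y : lc_lt x y \/ x = y \/ lc_lt y x.
Proof.
case: (lead_pos_trichotomy (lc_lf (lc_sub y x))) => [yx|[|yx]]; [right; left|by left|].
  by apply: lc_ext => q; apply/eqP; rewrite eq_sym -subr_eq0; apply/eqP; exact: yx.
by right; right; apply: lead_pos_ext yx => q /=; rewrite opprB.
Qed.

Lemma lc_lt_le_trans x y z : lc_lt x y -> lc_le y z -> lc_lt x z.
Proof. by move=> xy [<-//|]; exact: lc_lt_trans. Qed.

Lemma lc_le_trans x y z : lc_le x y -> lc_le y z -> lc_le x z.
Proof. by case=> [->//|xy] yz; right; exact: lc_lt_le_trans yz. Qed.

Lemma lc_lt_nle x y : lc_lt x y -> ~ lc_le y x.
Proof.
move=> xy [yx|yx]; last exact: lc_lt_asym xy yx.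
by move: xy; rewrite yx => xx; exact: (lc_lt_asym xx xx).
Qed.

Lemma lc_nle_lt x y : ~ lc_le x y -> lc_lt y x.
Proof. by case: (lc_trichotomy x y) => [xy|[->|//]] []; [right|left]. Qed.

Lemma lc_nlt_le x y : ~ lc_lt x y -> lc_le y x.
Proof. by case: (lc_trichotomy x y) => [//|[->|yx]] _; [left|right]. Qed.

End LeviCivitaOrder.

Section TruncatedOrder.
Variable R : realType.
Implicit Types (f g h : rat -> R) (x y : LC R).

Definition null_below q f := forall p, p < q -> f p = 0.

(* [f <= g] modulo terms of order at least [q] *)
Definition le_upto q f g :=
  exists t, null_below q t /\ lead_nneg (fun p => g p + t p - f p).

Lemma null_belowD q f g : null_below q f -> null_below q g ->
  null_below q (fun p => f p + g p).
Proof. by move=> f0 g0 p pq; rewrite f0 ?g0 ?addr0. Qed.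

Lemma null_below_le q q' f : q' <= q -> null_below q f -> null_below q' f.
Proof. by move=> q'q f0 p pq'; apply: f0; exact: lt_le_trans q'q. Qed.

Lemma le_upto_nneg q f g : lead_nneg (fun p => g p - f p) -> le_upto q f g.
Proof. by move=> fg; exists (fun=> 0); split=> //; apply: lead_nneg_ext fg => p; rewrite addr0. Qed.

Lemma le_upto_null q f g : null_below q (fun p => f p - g p) -> le_upto q f g.
Proof. by move=> fg; exists (fun p => f p - g p); split=> //; left=> p; lra. Qed.

Lemma le_upto_trans q f g h : le_upto q f g -> le_upto q g h -> le_upto q f h.
Proof.
move=> [t [t0 fg]] [t' [t'0 gh]]; exists (fun p => t p + t' p).
by split; [exact: null_belowD|apply: lead_nneg_ext (lead_nnegD fg gh) => p; lra].
Qed.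

Lemma le_upto_le q q' f g : q' <= q -> le_upto q f g -> le_upto q' f g.
Proof. by move=> q'q [t [t0 fg]]; exists t; split=> //; exact: null_below_le t0. Qed.

Lemma le_uptoD2r q f g h :
  le_upto q (fun p => f p + h p) (fun p => g p + h p) <-> le_upto q f g.
Proof. by split=> -[t [t0 fg]]; exists t; split=> //; apply: lead_nneg_ext fg => p; lra. Qed.

Lemma not_le_upto q f g p : p < q -> g p - f p < 0 ->
  (forall r, r < p -> g r = f r) -> ~ le_upto q f g.
Proof.
move=> pq fg_lt eq_below [t [t0 fg]]; apply: (lead_nneg_asym fg); exists p.
rewrite t0 // addr0 oppr_gt0; split=> // r rp.
by rewrite t0 ?eq_below ?addr0 ?subrr ?oppr0 //; exact: lt_trans pq.
Qed.

Lemma le_upto_antisym q f g : left_finite (fun p => f p - g p) ->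
  le_upto q f g -> le_upto q g f -> null_below q (fun p => f p - g p).
Proof.
move=> lf fg gf p pq; apply/eqP; apply: contraT => fgp; exfalso.
have [p0 [fgp0 fg0]] := least_support lf fgp.
have p0q : p0 < q.
  apply: le_lt_trans pq; rewrite leNgt; apply: contraNN fgp => pp0.
  by rewrite fg0.
have eq_below r : r < p0 -> g r = f r.
  by move=> /fg0 /eqP; rewrite subr_eq0 eq_sym => /eqP.
case: (ltgtP (f p0 - g p0) 0) => fgp0_sgn.
- exact: (not_le_upto p0q fgp0_sgn (fun r rp => esym (eq_below r rp)) gf).
- have gfp0 : g p0 - f p0 < 0 by lra.
  exact: (not_le_upto p0q gfp0 eq_below fg).
- by rewrite fgp0_sgn eqxx in fgp0.
Qed.

Lemma null_below_sandwich q f g : left_finite f ->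
  le_upto q (fun=> 0) f -> le_upto q f g -> null_below q g -> null_below q f.
Proof.
move=> lf f_ge0 fg g0 p pq; rewrite -[f p]subr0.
have f_le0 : le_upto q f (fun=> 0).
  by apply: le_upto_trans fg (le_upto_null _) => r rq; rewrite g0 ?subrr.
apply: (@le_upto_antisym q f (fun=> 0)) => // r.
by apply: sub_finite_set (lf r) => s [sr]; rewrite subr0.
Qed.

Lemma lead_nneg_le_upto f g : left_finite (fun p => g p - f p) ->
  (forall q, le_upto q f g) -> lead_nneg (fun p => g p - f p).
Proof.
move=> lf fg; case: (lead_pos_trichotomy lf) => [|[|[p [fgp fg0]]]]; [by left|by right|].
exfalso; apply: (@not_le_upto (p + 1) f g p); rewrite ?ltrDl //; first lra.
by move=> r /fg0 /eqP; rewrite oppr_eq0 subr_eq0 => /eqP.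
Qed.

Lemma lc_le_upto x y : lc_le x y <-> forall q, le_upto q x y.
Proof.
split=> [/lc_leE xy q|xy]; first exact: le_upto_nneg.
by apply/lc_leE; apply: lead_nneg_le_upto (lc_lf (lc_sub y x)) xy.
Qed.

Lemma le_upto_lc_le q x y : lc_le x y -> le_upto q x y.
Proof. by move/lc_le_upto. Qed.

End TruncatedOrder.

Lemma eventually_le_addn (r q : rat) : exists N, forall n, (N <= n)%N -> q <= r + n%:R.
Proof.
exists (Num.truncn (q - r)).+1 => n Nn; rewrite -lerBlDl.
by apply: ltW; apply: lt_le_trans (truncnS_gt _) _; rewrite ler_nat.
Qed.

Section Limits.
Variable R : realType.
Implicit Types (x y l c : LC R) (u a b : nat -> LC R).

Definition dpow_fun (q : rat) : rat -> R := fun p => (p == q)%:R.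

Lemma dpow_left_finite q : left_finite (dpow_fun q).
Proof.
move=> r; apply: (@sub_finite_set _ _ [set q]); last exact: finite_set1.
by move=> p [_]; rewrite /dpow_fun; case: (p =P q) => [-> _ //|_]; rewrite eqxx.
Qed.

(* the monomial [d^q], where [d] is the infinitesimal with [d[1] = 1] *)
Definition dpow q : LC R := mkLC (dpow_left_finite q).

Lemma null_below_dpow q : null_below q (dpow q).
Proof. by move=> p pq; rewrite /= /dpow_fun lt_eqF. Qed.

Lemma dpow_pos q : lc_pos (dpow q).
Proof. by exists q; rewrite /= /dpow_fun eqxx ltr01; split=> // p /lt_eqF ->. Qed.

Lemma dpow_gt0 q : lc_lt (lc_zero R) (dpow q).
Proof. by apply: lead_pos_ext (dpow_pos q) => p /=; rewrite subr0. Qed.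

Lemma lc_cvgP u l : lc_cvg u l <->
  forall q, exists N, forall n, (N <= n)%N -> forall p, p < q -> u n p = l p.
Proof.
split=> [ul q|ul e [pe [ep e0]]].
  have [N uNl] := ul _ (dpow_pos q).
  exists N => n Nn p pq; have [unl lun] := uNl n Nn.
  have le_ul : le_upto q (u n) l.
    exists (dpow q); split; first exact: null_below_dpow.
    by right; apply: lead_pos_ext unl => r /=; lra.
  have le_lu : le_upto q l (u n).
    exists (dpow q); split; first exact: null_below_dpow.
    by right; apply: lead_pos_ext lun => r /=; lra.
  apply/eqP; rewrite -subr_eq0; apply/eqP.
  exact: le_upto_antisym (lc_lf (lc_sub (u n) l)) le_ul le_lu p pq.
have e_sub f : (forall r, r <= pe -> f r = 0) -> lead_pos (fun r => e r - f r).
  by move=> f0; exists pe; rewrite f0 // subr0; split=> // r rpe; rewrite f0 ?ltW // subr0 e0.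
have [N uNl] := ul (pe + 1); exists N => n Nn.
have uNl' r : r <= pe -> u n r = l r.
  by move=> rpe; apply: uNl => //; apply: le_lt_trans rpe _; rewrite ltrDl.
by split; apply: e_sub => r rpe /=; rewrite uNl' // subrr.
Qed.

Lemma lc_complete u :
  (forall q, exists N, forall n m, (N <= n)%N -> (N <= m)%N ->
     forall p, p < q -> u n p = u m p) ->
  exists l, lc_cvg u l.
Proof.
move=> /choice [N uN].
have uN_eq r p : p < r -> u (N (p + 1)) p = u (N r) p.
  move=> pr; rewrite (uN (p + 1) _ (maxn (N (p + 1)) (N r))) ?leq_maxl ?ltrDl //.
  by rewrite (uN r (maxn (N (p + 1)) (N r)) (N r)) ?leq_maxr.
have lf : left_finite (fun p => u (N (p + 1)) p).
  move=> r; apply: sub_finite_set (lc_lf (u (N r)) r) => p [pr].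
  by rewrite (uN_eq r p pr).
exists (mkLC lf); apply/lc_cvgP => q; exists (N q) => n Nn p pq /=.
by rewrite (uN_eq q p pq) (uN q n (N q)).
Qed.

Lemma lc_psumE a n p : lc_psum a n p = \sum_(0 <= i < n) a i p.
Proof.
elim: n => [|n IH]; first by rewrite big_geq.
by rewrite big_nat_recr //= -IH.
Qed.

Lemma ex_lc_series a :
  (forall q, exists N, forall n, (N <= n)%N -> null_below q (a n)) ->
  exists s, lc_series a s.
Proof.
move=> a0; apply: lc_complete => q; have [N aN0] := a0 q; exists N.
suff psumN n p : (N <= n)%N -> p < q -> lc_psum a n p = lc_psum a N p.
  by move=> n m Nn Nm p pq; rewrite !psumN.
move=> Nn pq; rewrite !lc_psumE (big_cat_nat (leq0n N) Nn) /= [X in _ + X]big1_seq ?addr0 //.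
by move=> i; rewrite mem_index_iota => /andP [_ /andP [Ni _]]; apply: aN0.
Qed.

Lemma lc_series_terms a s : lc_series a s ->
  forall q, exists N, forall n, (N <= n)%N -> null_below q (a n).
Proof.
move/lc_cvgP => as_cvg q; have [N aN] := as_cvg q; exists N => n Nn p pq.
move: (aN n.+1 (leqW Nn) p pq); rewrite -(aN n Nn p pq) /=.
by move/eqP; rewrite -subr_eq0 addrAC subrr add0r => /eqP.
Qed.

Lemma lc_series_eventually a s q : lc_series a s -> exists N,
  (forall n, (N <= n)%N -> forall p, p < q -> lc_psum a n p = s p) /\
  (forall n, (N <= n)%N -> null_below q (a n)).
Proof.
move=> as_s; have [N1 aN1] := iffLR (lc_cvgP _ _) as_s q.
have [N2 aN2] := lc_series_terms as_s q.
by exists (maxn N1 N2); split=> n; rewrite geq_max => /andP [N1n N2n]; [exact: aN1|exact: aN2].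
Qed.

Lemma lc_cvg_null_below u l c r N0 : lc_cvg u l ->
  (forall n, (N0 <= n)%N -> null_below r (fun p => u n p - c p)) ->
  null_below r (fun p => l p - c p).
Proof.
move/lc_cvgP => ul uc p pr; have [N uNl] := ul r.
by rewrite -(uNl (maxn N N0) (leq_maxl _ _) p pr) uc ?leq_maxr.
Qed.

Lemma lc_cvg_ge u l c N0 : lc_cvg u l ->
  (forall n, (N0 <= n)%N -> lc_le c (u n)) -> lc_le c l.
Proof.
move/lc_cvgP => ul cu; apply/lc_le_upto => q; have [N uNl] := ul q.
apply: (@le_upto_trans _ _ _ (u (maxn N N0))).
  by have /lc_le_upto := cu _ (leq_maxr N N0); apply.
by apply: le_upto_null => p pq; rewrite uNl ?leq_maxl // subrr.
Qed.

Lemma lc_series_null_below a s r :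
  (forall k, null_below r (a k)) -> lc_series a s -> null_below r s.
Proof.
move=> a0 as_s p pr; rewrite -[s p]subr0.
apply: (@lc_cvg_null_below _ _ (lc_zero R) r 0%N as_s) => // n _ {}p {}pr.
by rewrite /= subr0 lc_psumE big1_seq // => i _; apply: a0.
Qed.

Lemma lc_series_ext a b s : (forall k p, a k p = b k p) ->
  lc_series a s -> lc_series b s.
Proof.
move=> ab /lc_cvgP as_s; apply/lc_cvgP => q; have [N aN] := as_s q.
exists N => n Nn p pq; rewrite -(aN n Nn p pq) !lc_psumE.
by apply: eq_bigr => i _; rewrite ab.
Qed.

Lemma lc_seriesD a b (c : nat -> LC R) x y : lc_series a x -> lc_series b y ->
  (forall k p, c k p = a k p + b k p) -> lc_series c (lc_add x y).
Proof.
move=> /lc_cvgP ax /lc_cvgP bx abc; apply/lc_cvgP => q.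
have [N1 aN] := ax q; have [N2 bN] := bx q; exists (maxn N1 N2) => n.
rewrite geq_max => /andP [N1n N2n] p pq.
by rewrite /= -(aN n N1n p pq) -(bN n N2n p pq) !lc_psumE -big_split; apply: eq_bigr.
Qed.

Lemma lc_series_unique a x y : lc_series a x -> lc_series a y -> x = y.
Proof.
move=> /lc_cvgP ax /lc_cvgP ay; apply: lc_ext => p.
have [N1 aN1] := ax (p + 1); have [N2 aN2] := ay (p + 1).
have pp : p < p + 1 by rewrite ltrDl.
by rewrite -(aN1 (maxn N1 N2) (leq_maxl _ _) p pp) (aN2 (maxn N1 N2) (leq_maxr _ _) p pp).
Qed.

Lemma lc_series_term_le a s k : (forall k, lc_le (lc_zero R) (a k)) ->
  lc_series a s -> lc_le (a k) s.
Proof.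
move=> a_ge0 as_s; apply: (lc_cvg_ge (N0 := k.+1) as_s) => n kn; apply/lc_leE.
suff : lead_nneg (fun p => \sum_(0 <= i < n | i != k) a i p).
  apply: lead_nneg_ext => p; rewrite lc_psumE (bigD1_seq k) ?iota_uniq //=.
    by rewrite addrAC subrr add0r.
  by rewrite mem_index_iota.
elim: (index_iota 0 n) => [|i r IH]; first by left=> p; rewrite big_nil.
case: (boolP (i != k)) => ik; last by apply: lead_nneg_ext IH => p; rewrite big_cons (negbTE ik).
have /lc_leE ai := a_ge0 i.
by apply: lead_nneg_ext (lead_nnegD ai IH) => p /=; rewrite big_cons ik subr0.
Qed.

Lemma dpow_series r : exists s,
  lc_series (fun k => dpow (r + k%:R)) s /\ null_below r s.
Proof.
have [s rs] : exists s, lc_series (fun k => dpow (r + k%:R)) s.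
  apply: ex_lc_series => q; have [N rN] := eventually_le_addn r q.
  by exists N => n Nn; exact: (null_below_le (rN n Nn) (@null_below_dpow (r + n%:R))).
exists s; split=> //; apply: lc_series_null_below rs => k /=.
by apply: null_below_le (@null_below_dpow (r + k%:R)); rewrite lerDl.
Qed.

End Limits.

Lemma ex_ub_nat (F : nat -> nat) N : exists B, forall n, (n < N)%N -> (F n < B)%N.
Proof.
exists (\max_(n <- index_iota 0 N) F n).+1 => n nN; rewrite ltnS.
by apply: leq_bigmax_seq; rewrite ?mem_index_iota.
Qed.

Lemma nat_pair_bijective : exists f : nat -> nat * nat, bijective f.
Proof.
have /card_set_bijP [h [_ h_inj h_surj]] := card_nat2.
have /choice [f hK] : forall i, exists x : nat * nat, h x = i.
  by move=> i; have [x _ <-] := h_surj i Logic.I; exists x.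
by exists f, h => [i|x]; last apply: h_inj; rewrite ?inE ?hK.
Qed.

Lemma big_rect_reindex (V : nmodType) (F : nat -> nat -> V)
    (f : nat -> nat * nat) (g : nat * nat -> nat) N K I :
  cancel f g -> cancel g f ->
  (forall n k, (n < N)%N -> (k < K)%N -> (g (n, k) < I)%N) ->
  \sum_(0 <= i < I | ((f i).1 < N)%N && ((f i).2 < K)%N) F (f i).1 (f i).2 =
  \sum_(0 <= n < N) \sum_(0 <= k < K) F n k.
Proof.
move=> fK gK gI; set rect := [seq (n, k) | n <- index_iota 0 N, k <- index_iota 0 K].
rewrite -big_filter (perm_big (map g rect)) ?big_map ?big_allpairs.
  by apply: eq_bigr => n _; apply: eq_bigr => k _; rewrite gK.
apply: uniq_perm; first exact/filter_uniq/iota_uniq.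
  rewrite (map_inj_uniq (can_inj gK)) allpairs_uniq ?iota_uniq //.
  by move=> [? ?] [? ?] _ _ /= [-> ->].
move=> i; rewrite mem_filter mem_index_iota /=; apply/idP/idP.
  move=> /andP [/andP [fi1 fi2] _]; apply/mapP; exists (f i); last by rewrite fK.
  by apply/allpairsP; exists (f i); rewrite !mem_index_iota /=; case: (f i) fi1 fi2.
move=> /mapP [_ /allpairsP [[n k] /= [+ + ->]] ->].
by rewrite !mem_index_iota gK /= => nN kK; rewrite nN kK gI.
Qed.

Section DoubleSeries.
Variable R : realType.
Implicit Types (a : nat -> LC R) (q : rat).

Lemma lc_nneg_series_null_below a s q : (forall k, lc_le (lc_zero R) (a k)) ->
  lc_series a s -> null_below q s -> forall k, null_below q (a k).
Proof.
move=> a_ge0 as_s s0 k; apply: (null_below_sandwich (lc_lf (a k))) s0.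
  by apply: le_upto_nneg; have /lc_leE := a_ge0 k; apply: lead_nneg_ext => p; rewrite subr0.
by have /lc_le_upto := lc_series_term_le k a_ge0 as_s; apply.
Qed.

Lemma lc_series_flatten (a : nat -> nat -> LC R) (s : nat -> LC R) S
    (f : nat -> nat * nat) : bijective f ->
  (forall n k, lc_le (lc_zero R) (a n k)) ->
  (forall n, lc_series (a n) (s n)) -> lc_series s S ->
  lc_series (fun i => a (f i).1 (f i).2) S.
Proof.
move=> [g fK gK] a_ge0 as_s sS; apply/lc_cvgP => q.
have [N [sN sN0]] := lc_series_eventually q sS.
have late_rows n k : (N <= n)%N -> null_below q (a n k).
  by move=> Nn; exact: lc_nneg_series_null_below (a_ge0 n) (as_s n) (sN0 n Nn) k.
have /choice [Kf /all_and2 [rowK rowK0]] := fun n => lc_series_eventually q (as_s n).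
have [K KfK] := ex_ub_nat Kf N.
have /choice [B gB] : forall n, exists B, forall k, (k < K)%N -> (g (n, k) < B)%N.
  by move=> n; exact: ex_ub_nat.
have [I BI] := ex_ub_nat B N.
exists I => i Ii p pq; rewrite lc_psumE (bigID (fun j => ((f j).1 < N) && ((f j).2 < K))%N) /=.
rewrite [X in _ + X]big1 ?addr0; last first.
  move=> j; rewrite negb_and -!leqNgt => /orP [Nj|Kj]; first exact: late_rows.
  have [Nj|Nj] := ltnP (f j).1 N; last exact: late_rows.
  by apply: (rowK0 _ _ _ p pq); apply: ltnW; exact: leq_trans (KfK _ Nj) Kj.
rewrite (big_rect_reindex (fun n k => a n k p) fK gK); last first.
  by move=> n k nN kK; apply: ltn_trans (gB n k kK) (leq_trans (BI n nN) Ii).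
rewrite -(sN N (leqnn N) p pq) lc_psumE.
apply: eq_big_seq => n; rewrite mem_index_iota => /andP [_ nN].
by rewrite -lc_psumE rowK //; exact/ltnW/KfK.
Qed.

End DoubleSeries.

Definition interleave (T : Type) (u v : nat -> T) (i : nat) : T :=
  if odd i then v i./2 else u i./2.

Section Interleave.
Variable R : realType.
Implicit Types (a b : nat -> LC R).

Lemma lc_psum_interleave_double a b n p :
  lc_psum (interleave a b) n.*2 p = lc_psum a n p + lc_psum b n p.
Proof.
elim: n => [|n IH] /=; first by rewrite addr0.
by rewrite IH /interleave /= odd_double /= half_double uphalf_double; lra.
Qed.

Lemma lc_series_interleave a b x y : lc_series a x -> lc_series b y ->
  lc_series (interleave a b) (lc_add x y).
Proof.
move=> ax /lc_cvgP by_; apply/lc_cvgP => q.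
have [N1 [aN1 aN1_0]] := lc_series_eventually q ax; have [N2 bN2] := by_ q.
exists (maxn N1 N2).*2 => m; rewrite -{1 2}(odd_double_half m).
set n := m./2 => Nm p pq.
have : (maxn N1 N2 <= n)%N by move: Nm; case: (odd m) => /=; lia.
rewrite geq_max => /andP [N1n N2n].
have -> : lc_psum (interleave a b) (odd m + n.*2) p = lc_psum a n p + lc_psum b n p.
  case: (odd m); last exact: lc_psum_interleave_double.
  by rewrite /= lc_psum_interleave_double /interleave /= odd_double half_double aN1_0 ?addr0.
by rewrite aN1 ?bN2.
Qed.

End Interleave.

Section Intervals.
Variable R : realType.
Implicit Types (x y z u v d : LC R) (I S J : lc_interval R).

Definition lc_max x y := if pselect (lc_lt x y) then y else x.
Definition lc_min x y := if pselect (lc_lt x y) then x else y.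

Lemma lc_le_maxl x y : lc_le x (lc_max x y).
Proof. by rewrite /lc_max; case: pselect => xy; [exact: lc_ltW|exact: lc_le_refl]. Qed.

Lemma lc_le_maxr x y : lc_le y (lc_max x y).
Proof. by rewrite /lc_max; case: pselect => xy; [exact: lc_le_refl|exact: lc_nlt_le]. Qed.

Lemma lc_max_le x y z : lc_le x z -> lc_le y z -> lc_le (lc_max x y) z.
Proof. by rewrite /lc_max; case: pselect. Qed.

Lemma lc_ge_minl x y : lc_le (lc_min x y) x.
Proof. by rewrite /lc_min; case: pselect => xy; [exact: lc_le_refl|exact: lc_nlt_le]. Qed.

Lemma lc_ge_minr x y : lc_le (lc_min x y) y.
Proof. by rewrite /lc_min; case: pselect => xy; [exact: lc_ltW|exact: lc_le_refl]. Qed.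

Lemma lc_le_min x y z : lc_le z x -> lc_le z y -> lc_le z (lc_min x y).
Proof. by rewrite /lc_min; case: pselect. Qed.

Lemma lc_lt_addr_pos x y d : lc_le x y -> lc_pos d -> lc_lt x (lc_add y d).
Proof.
move=> /lc_leE xy d_gt0.
by apply: lead_pos_ext (lead_nneg_posD xy d_gt0) => p /=; lra.
Qed.

Lemma lc_le_addr_pos x d : lc_pos d -> lc_le x (lc_add x d).
Proof. by move=> d_gt0; apply/lc_ltW/lc_lt_addr_pos => //; exact: lc_le_refl. Qed.

Definition lc_itv_cc x y (xy : lc_lt x y) : lc_interval R := @mkInterval R x y true true xy.

Lemma in_intervalP I x : in_interval I x -> lc_le (ia I) x /\ lc_le x (ib I).
Proof.
case=> [[h1|[_ h1]] [h2|[_ h2]]]; split;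
  by [right|left; rewrite h1|right|left; rewrite h2|left].
Qed.

Lemma in_itv_cc x y (xy : lc_lt x y) z :
  lc_le x z -> lc_le z y -> in_interval (lc_itv_cc xy) z.
Proof. by move=> [xz|xz] [zy|zy]; split; by [right; split|left]. Qed.

Lemma ilength_ge0 I : lc_le (lc_zero R) (ilength I).
Proof. by right; apply: lead_pos_ext (iab I) => p /=; rewrite subr0. Qed.

Definition pad_length d S I :=
  lc_le (lc_zero R) (lc_sub (ilength I) d) /\ lc_le (lc_sub (ilength I) d) (ilength S).

Lemma pad_length_itv_cc d S u v (uv : lc_lt u (lc_add v d)) :
  lc_le (ia S) u -> lc_le u v -> lc_le v (ib S) -> pad_length d S (lc_itv_cc uv).
Proof.
move=> /lc_leE Su /lc_leE uv' /lc_leE vS; split; apply/lc_leE.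
  by apply: lead_nneg_ext uv' => p /=; lra.
by apply: lead_nneg_ext (lead_nnegD Su vS) => p /=; lra.
Qed.

Lemma interval_split3 S J d : lc_pos d -> exists Lf Md Rt : lc_interval R,
  [/\ in_interval S `&` in_interval J `<=` in_interval Md,
      in_interval S `\` in_interval J `<=` in_interval Lf `|` in_interval Rt,
      (forall p, ilength Lf p + ilength Md p + ilength Rt p = ilength S p + 3%:R * d p) &
      [/\ pad_length d S Lf, pad_length d S Md & pad_length d S Rt]].
Proof.
move=> d_gt0; set s1 := ia S; set s2 := ib S.
have s12 : lc_le s1 s2 := lc_ltW (iab S).
pose clamp x := lc_min (lc_max x s1) s2.
have clamp_ge x : lc_le s1 (clamp x) by apply: lc_le_min => //; exact: lc_le_maxr.
have clamp_le x : lc_le (clamp x) s2 by exact: lc_ge_minr.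
set c1 := clamp (ia J); set c2 := clamp (ib J).
have c12 : lc_le c1 c2.
  apply: lc_le_min (clamp_le _); apply: lc_le_trans (lc_ge_minl _ _) _.
  apply: lc_max_le; last exact: lc_le_maxr.
  exact: lc_le_trans (lc_ltW (iab J)) (lc_le_maxl _ _).
have h1 := lc_lt_addr_pos (clamp_ge (ia J)) d_gt0.
have h2 := lc_lt_addr_pos c12 d_gt0.
have h3 := lc_lt_addr_pos (clamp_le (ib J)) d_gt0.
(* [c1, c2] is [J] clamped to [S]; the pieces are [s1, c1 + d], [c1, c2 + d], [c2, s2 + d] *)
exists (lc_itv_cc h1), (lc_itv_cc h2), (lc_itv_cc h3); split.
- move=> x [/in_intervalP [s1x xs2] /in_intervalP [j1x xj2]]; apply: in_itv_cc.
    by apply: lc_le_trans (lc_ge_minl _ _) _; exact: lc_max_le.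
  apply: lc_le_trans (lc_le_addr_pos _ d_gt0); apply: lc_le_min => //.
  exact: lc_le_trans xj2 (lc_le_maxl _ _).
- move=> x [/in_intervalP [s1x xs2] xNJ].
  case: (pselect (lc_lt (ia J) x)) => j1x; last first.
    left; apply: in_itv_cc => //; apply: lc_le_trans (lc_le_addr_pos _ d_gt0).
    by apply: lc_le_min => //; exact: lc_le_trans (lc_nlt_le j1x) (lc_le_maxl _ _).
  case: (pselect (lc_lt x (ib J))) => xj2; first by exfalso; apply: xNJ; split; left.
  right; apply: in_itv_cc; last exact: lc_le_trans xs2 (lc_le_addr_pos _ d_gt0).
  by apply: lc_le_trans (lc_ge_minl _ _) _; apply: lc_max_le => //; exact: lc_nlt_le.
- by move=> p /=; lra.
- split; apply: pad_length_itv_cc;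
    by [exact: lc_le_refl|exact: clamp_ge|exact: clamp_le|exact: c12].
Qed.

End Intervals.

Section Covers.
Variable R : realType.
Implicit Types (A B X Y : set (LC R)) (J : lc_interval R) (S P Q : nat -> lc_interval R).

Lemma cover_with_sum_sub A A' S s : A' `<=` A -> cover_with_sum A S s -> cover_with_sum A' S s.
Proof. by move=> A'A [AS Ss]; split=> //; exact: subset_trans AS. Qed.

Lemma cover_with_sum_ge0 A S s : cover_with_sum A S s -> lc_le (lc_zero R) s.
Proof.
move=> [_ Ss]; apply: lc_le_trans (ilength_ge0 (S 0)) _.
exact: lc_series_term_le (fun k => ilength_ge0 (S k)) Ss.
Qed.

Lemma cover_with_sum_bigcup S s : lc_series (fun k => ilength (S k)) s ->
  cover_with_sum (\bigcup_k in_interval (S k)) S s.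
Proof. by split. Qed.

Lemma cover_with_sumU X Y P Q s1 s2 :
  cover_with_sum X P s1 -> cover_with_sum Y Q s2 ->
  cover_with_sum (X `|` Y) (interleave P Q) (lc_add s1 s2).
Proof.
move=> [XP Ps] [YQ Qs]; split.
  move=> x [/XP [k _ xk]|/YQ [k _ xk]]; [exists k.*2|exists k.*2.+1] => //;
    by rewrite /interleave /= ?odd_double ?half_double ?uphalf_double.
apply: lc_series_ext (lc_series_interleave Ps Qs) => i p.
by rewrite /interleave; case: (odd i).
Qed.

Lemma lc_series_pad S s P q : lc_series (fun k => ilength (S k)) s ->
  (forall k, pad_length (dpow R (q + k%:R)) (S k) (P k)) ->
  exists sP, lc_series (fun k => ilength (P k)) sP.
Proof.
move=> Ss SI; apply: ex_lc_series => r.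
have [N1 SN1] := lc_series_terms Ss r; have [N2 rN2] := eventually_le_addn q r.
exists (maxn N1 N2) => k; rewrite geq_max => /andP [N1k N2k].
have [pad_ge0 pad_le] := SI k.
have Pd0 : null_below r (lc_sub (ilength (P k)) (dpow R (q + k%:R))).
  apply: null_below_sandwich (lc_lf _) (le_upto_lc_le _ pad_ge0) _ (SN1 k N1k).
  exact: le_upto_lc_le.
have d0 : null_below r (dpow R (q + k%:R)) := null_below_le (rN2 k N2k) (@null_below_dpow R _).
by move=> p pr; move: (Pd0 p pr) (d0 p pr) => /=; lra.
Qed.

Lemma cover_split B S s J q : cover_with_sum B S s ->
  exists P sP Q sQ, [/\ cover_with_sum (B `&` in_interval J) P sP,
    cover_with_sum (B `\` in_interval J) Q sQ & le_upto q (fun p => sP p + sQ p) s].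
Proof.
move=> [BS Ss]; pose d k := dpow R (q + k%:R).
have /choice [LMR split_S] : forall k, exists LMR : lc_interval R * lc_interval R * lc_interval R,
    [/\ in_interval (S k) `&` in_interval J `<=` in_interval LMR.1.2,
        in_interval (S k) `\` in_interval J `<=` in_interval LMR.1.1 `|` in_interval LMR.2,
        (forall p, ilength LMR.1.1 p + ilength LMR.1.2 p + ilength LMR.2 p =
                   ilength (S k) p + 3%:R * d k p) &
        [/\ pad_length (d k) (S k) LMR.1.1, pad_length (d k) (S k) LMR.1.2
          & pad_length (d k) (S k) LMR.2]].
  move=> k; have [Lf [Md [Rt split_k]]] := interval_split3 (S k) J (dpow_pos R (q + k%:R)).
  by exists (Lf, Md, Rt).
pose Lf k := (LMR k).1.1; pose Md k := (LMR k).1.2; pose Rt k := (LMR k).2.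
have [covM covLR len_sum /all_and3 [padL padM padR]] := all_and4 split_S.
have [sL Ls] := lc_series_pad Ss padL.
have [sM Ms] := lc_series_pad Ss padM.
have [sR Rs] := lc_series_pad Ss padR.
have [D [Ds D0]] := dpow_series R q.
pose w k := lc_add (lc_add (ilength (Lf k)) (ilength (Md k))) (ilength (Rt k)).
have /lc_series_unique sums_eq : lc_series w (lc_add (lc_add sL sM) sR).
  by apply: (lc_seriesD (lc_seriesD Ls Ms (c := fun k => lc_add _ _) _) Rs).
have /sums_eq {}sums_eq : lc_series w (lc_add s (lc_add (lc_add D D) D)).
  apply: (lc_seriesD Ss (lc_seriesD (lc_seriesD Ds Ds (c := fun k => lc_add _ _) _) Ds
    (c := fun k => lc_add _ _) _)) => // k p.
  by rewrite /w /= len_sum /ilength /d /=; lra.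
exists Md, sM, (interleave Lf Rt), (lc_add sL sR); split.
- split=> // x [Bx xJ]; have [k _ xk] := BS x Bx; exists k => //; exact: covM.
- have LRs := cover_with_sumU (cover_with_sum_bigcup Ls) (cover_with_sum_bigcup Rs).
  apply: cover_with_sum_sub LRs => x [Bx xNJ].
  have [k _ xk] := BS x Bx.
  by case: (covLR k x (conj xk xNJ)) => [xL|xR]; [left|right]; exists k.
- apply: le_upto_null => p pq; move: (congr1 (fun z : LC R => z p) sums_eq) => /=.
  rewrite D0 //; lra.
Qed.

End Covers.

Section OuterMeasure.
Variable R : realType.
Implicit Types (E B : set (LC R)) (I J : lc_interval R).

Lemma lc_is_inf_approx E m : lc_is_inf E m ->
  forall q, exists s, E s /\ null_below q (fun p => s p - m p).
Proof.
move=> [m_lb m_glb] q; apply: contrapT => no_approx.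
have md_lb s : E s -> lc_le (lc_add m (dpow R q)) s.
  move=> Es; apply: contrapT => /lc_nle_lt sd; apply: no_approx; exists s; split=> //.
  have sm_ge0 : le_upto q (fun=> 0) (lc_sub s m).
    by apply: le_upto_nneg; have /lc_leE := m_lb s Es; apply: lead_nneg_ext => p /=; lra.
  have sm_le : le_upto q (lc_sub s m) (dpow R q).
    by apply: le_upto_nneg; have /lc_ltW/lc_leE := sd; apply: lead_nneg_ext => p /=; lra.
  exact: null_below_sandwich (lc_lf _) sm_ge0 sm_le (@null_below_dpow R q).
apply: lc_lt_nle (m_glb _ md_lb); apply: lead_pos_ext (dpow_pos R q) => p /=; lra.
Qed.

Lemma lc_is_inf_intro E m : (forall s, E s -> lc_le m s) ->
  (forall q, exists s, E s /\ le_upto q s m) -> lc_is_inf E m.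
Proof.
move=> m_lb m_approx; split=> // m' m'_lb; apply/lc_le_upto => q.
have [s [Es sm]] := m_approx q; exact: le_upto_trans (le_upto_lc_le _ (m'_lb s Es)) sm.
Qed.

Lemma ex_lc_is_inf E :
  (forall q, exists s, E s /\ forall e, E e -> le_upto q s e) -> exists m, lc_is_inf E m.
Proof.
move=> approx; have /choice [s /all_and2 [Es s_le]] := fun j : nat => approx j%:R.
have le_nat (q : rat) : exists N, forall n, (N <= n)%N -> q <= n%:R.
  by have [N qN] := eventually_le_addn 0 q; exists N => n /qN; rewrite add0r.
have [l /lc_cvgP sl] : exists l, lc_cvg s l.
  apply: lc_complete => q; have [N qN] := le_nat q; exists N => n k Nn Nk p pq.
  apply/eqP; rewrite -subr_eq0; apply/eqP.
  apply: (le_upto_antisym (lc_lf (lc_sub (s n) (s k)))) pq.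
    exact: le_upto_le (qN n Nn) (s_le n _ (Es k)).
  exact: le_upto_le (qN k Nk) (s_le k _ (Es n)).
exists l; apply: lc_is_inf_intro => [e Ee|r]; last first.
  have [N sN] := sl r; exists (s N); split=> //.
  by apply: le_upto_null => p pr; rewrite sN // subrr.
apply/lc_le_upto => r; have [N1 sN1] := sl r; have [N2 rN2] := le_nat r.
apply: (@le_upto_trans _ _ _ (s (maxn N1 N2))).
  by apply: le_upto_null => p pr; rewrite sN1 ?leq_maxl // subrr.
exact: le_upto_le (rN2 _ (leq_maxr _ _)) (s_le _ _ Ee).
Qed.

Lemma outer_measure_le B m S s : outer_measure B m -> cover_with_sum B S s -> lc_le m s.
Proof. by move=> [m_lb _] BS; apply: m_lb; exists S. Qed.

Lemma outer_measure_ge0 B m : outer_measure B m -> lc_le (lc_zero R) m.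
Proof. by move=> [_ m_glb]; apply: m_glb => s [S /cover_with_sum_ge0]. Qed.

Lemma outer_measure_approx B m q : outer_measure B m ->
  exists S s, cover_with_sum B S s /\ null_below q (fun p => s p - m p).
Proof. by move=> /lc_is_inf_approx /(_ q) [s [[S BS] sm]]; exists S, s. Qed.

Definition dpow_itv q : lc_interval R := lc_itv_cc (dpow_gt0 R q).

Lemma interval_cover I r : exists S s,
  cover_with_sum (in_interval I) S s /\ null_below r (fun p => s p - ilength I p).
Proof.
pose S k := if k == 0%N then I else dpow_itv (r + k%:R).
have [s Ss] : exists s, lc_series (fun k => ilength (S k)) s.
  apply: ex_lc_series => q; have [N qN] := eventually_le_addn r q.
  exists N.+1 => -[//|n] Nn p pq /=; rewrite subr0.
  by apply: (null_below_le (qN _ (ltnW Nn))) pq; exact: null_below_dpow.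
exists S, s; split; first by split=> // x xI; exists 0%N.
apply: (lc_cvg_null_below (N0 := 1%N) Ss) => -[//|n] _ p pr.
rewrite lc_psumE big_nat_recl //= big1_seq ?addr0 ?subrr // => i _.
by rewrite /= subr0; apply: null_below_le (@null_below_dpow R _) _ pr; rewrite lerDl.
Qed.

Lemma outer_measure_le_length B I m :
  outer_measure (B `&` in_interval I) m -> lc_le m (ilength I).
Proof.
move=> Bm; apply/lc_le_upto => r; have [S [s [IS sI]]] := interval_cover I r.
apply: le_upto_trans (le_upto_null sI).
exact/le_upto_lc_le/(outer_measure_le Bm)/(cover_with_sum_sub (@subIsetr _ _ _) IS).
Qed.

Lemma outer_measurable_setI_interval B J :
  outer_measurable B -> outer_measurable (B `&` in_interval J).
Proof.
move=> [M BM]; apply: ex_lc_is_inf => q.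
have [S [s [BS sM]]] := outer_measure_approx q BM.
have [P [sP [Q [sQ [BJP BJQ sPQ]]]]] := cover_split J q BS.
exists sP; split=> [|e [C BJC]]; first by exists P.
have Me : lc_le M (lc_add e sQ).
  apply: outer_measure_le BM (cover_with_sum_sub _ (cover_with_sumU BJC BJQ)) => x Bx.
  by case: (pselect (in_interval J x)); [left|right].
apply/(le_uptoD2r _ _ _ sQ); apply: le_upto_trans sPQ _.
exact: le_upto_trans (le_upto_null sM) (le_upto_lc_le _ Me).
Qed.

Lemma cover_bigcup (B : nat -> set (LC R)) (C : nat -> nat -> lc_interval R) s S :
  (forall n, cover_with_sum (B n) (C n) (s n)) -> lc_series s S ->
  exists T, cover_with_sum (\bigcup_n B n) T S.
Proof.
move=> BC sS; have [f f_bij] := nat_pair_bijective; have [g fK gK] := f_bij.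
exists (fun i => C (f i).1 (f i).2); split.
  move=> x [n _ /(BC n).1 [k _ xk]]; exists (g (n, k)) => //; by rewrite gK.
exact: lc_series_flatten f_bij (fun n k => ilength_ge0 _) (fun n => (BC n).2) sS.
Qed.

End OuterMeasure.

Section Additivity.
Variable R : realType.
Implicit Types (B : set (LC R)).

Lemma cover_bigcup_approx (B : nat -> set (LC R)) (m : nat -> LC R) M r :
  (forall n, outer_measure (B n) (m n)) -> lc_series m M ->
  exists S s, cover_with_sum (\bigcup_n B n) S s /\ le_upto r s M.
Proof.
move=> Bm mM.
have /choice [C /all_and2 [BC Cm]] : forall n, exists C,
    cover_with_sum (B n) C.1 C.2 /\ null_below (r + n%:R) (fun p => C.2 p - m n p).
  by move=> n; have [S [s Ss]] := outer_measure_approx (r + n%:R) (Bm n); exists (S, s).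
have [W CW] : exists W, lc_series (fun n => lc_sub (C n).2 (m n)) W.
  apply: ex_lc_series => q; have [N qN] := eventually_le_addn r q.
  by exists N => n Nn; exact: null_below_le (qN n Nn) (Cm n).
have W0 : null_below r W.
  by apply: lc_series_null_below CW => n; apply: null_below_le (Cm n); rewrite lerDl.
have Cs : lc_series (fun n => (C n).2) (lc_add M W).
  by apply: lc_seriesD mM CW _ => k p /=; lra.
have [T BT] := cover_bigcup BC Cs.
exists T, (lc_add M W); split=> //.
by apply: le_upto_null => p pr /=; rewrite W0 //; lra.
Qed.

Variables (J : nat -> lc_interval R).
Hypothesis J_disj : forall i j, i <> j -> in_interval (J i) `&` in_interval (J j) = set0.

Definition tail_union N := \bigcup_(n in [set n | (N <= n)%N]) in_interval (J n).

Lemma cover_tail_union B (m : nat -> LC R) S s r :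
  (forall n, outer_measure (B `&` in_interval (J n)) (m n)) ->
  cover_with_sum (B `&` \bigcup_n in_interval (J n)) S s ->
  forall N, exists SN sN, cover_with_sum (B `&` tail_union N) SN sN /\
    le_upto r (fun p => sN p + lc_psum m N p) s.
Proof.
move=> Bm BS; elim=> [|N [SN [sN [BSN le_s]]]].
  exists S, s; split; last by apply: le_upto_null => p _ /=; rewrite addr0 subrr.
  by apply: cover_with_sum_sub BS => x [Bx [n _ xn]]; split=> //; exists n.
have [P [sP [Q [sQ [BP BQ sPQ]]]]] := cover_split (J N) r BSN.
exists Q, sQ; split.
  apply: cover_with_sum_sub BQ => x [Bx [n /= Nn xn]]; split.
    by split=> //; exists n => //; exact: ltnW.
  move=> xN; have nN : n <> N by move=> nN; rewrite nN ltnn in Nn.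
  by have : (in_interval (J n) `&` in_interval (J N)) x by []; rewrite J_disj.
have mP : lc_le (m N) sP.
  apply: outer_measure_le (Bm N) (cover_with_sum_sub _ BP) => x [Bx xN].
  by split=> //; split=> //; exists N => /=.
apply: le_upto_trans le_s; apply: (@le_upto_trans _ _ _ (fun p => sP p + sQ p + lc_psum m N p)).
  by apply: le_upto_nneg; have /lc_leE := mP; apply: lead_nneg_ext => p /=; lra.
exact/le_uptoD2r.
Qed.

Lemma lc_series_le_cover B (m : nat -> LC R) M S s :
  (forall n, outer_measure (B `&` in_interval (J n)) (m n)) -> lc_series m M ->
  cover_with_sum (B `&` \bigcup_n in_interval (J n)) S s -> lc_le M s.
Proof.
move=> Bm mM BS; apply/lc_le_upto => r.
have [N mN] := iffLR (lc_cvgP _ _) mM r.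
have [SN [sN [BSN le_s]]] := cover_tail_union r Bm BS N.
apply: (@le_upto_trans _ _ _ (lc_psum m N)).
  by apply: le_upto_null => p pr; rewrite mN // subrr.
apply: le_upto_trans le_s; apply: le_upto_nneg.
by have /lc_leE := cover_with_sum_ge0 BSN; apply: lead_nneg_ext => p /=; lra.
Qed.

End Additivity.

Theorem mainTheorem5 (R : realType) (A : set (LC R)) (J : nat -> lc_interval R) :
  outer_measurable A ->
  (forall i j : nat, i <> j -> in_interval (J i) `&` in_interval (J j) = set0) ->
  lc_cvg (fun n => ilength (J n)) (lc_zero R) ->
  exists M : LC R,
    outer_measure (A `&` \bigcup_n in_interval (J n)) M /\
    exists m : nat -> LC R,
      (forall n, outer_measure (A `&` in_interval (J n)) (m n)) /\
      lc_series m M.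
Proof.
move=> A_meas J_disj J_cvg0.
have /choice [m Am] := fun n => outer_measurable_setI_interval (J n) A_meas.
have m_null q : exists N, forall n, (N <= n)%N -> null_below q (m n).
  have [N JN] := iffLR (lc_cvgP _ _) J_cvg0 q; exists N => n Nn.
  apply: null_below_sandwich (lc_lf _) _ _ (JN n Nn).
    exact: le_upto_lc_le (outer_measure_ge0 (Am n)).
  exact: le_upto_lc_le (outer_measure_le_length (Am n)).
have [M mM] := ex_lc_series m_null.
exists M; split; last by exists m.
apply: lc_is_inf_intro => [s [S AS]|r]; first exact: (lc_series_le_cover J_disj Am mM AS).
have [S [s [AS sM]]] := cover_bigcup_approx r Am mM.
by exists s; split=> //; exists S; rewrite setI_bigcupr.
Qed.
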